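(* Let $\mathcal{M}$ be a set of mappings over a schema $\Sigma$, $\mathcal{D}$ a database instance of $\Sigma$, and $q(\vec x)\leftarrow L_1(\vec v_1),\dots,L_n(\vec v_n)$ a conjunctive query. If the answer template matrix $\mathrm{atm}(\mathrm{unf}(q(\vec x),\mathrm{wrap}(\mathcal{M})))$ does not contain repeated rows, then $$|\mathrm{unf}(q(\vec x),\mathcal{M})^{\mathcal{D}}|=\sum_{q_u\in\mathrm{unf}(q,\mathrm{wrap}(\mathcal{M}))}|q_u(\vec x)^{\mathcal{D}}|.$$
   Context: A mapping is $L(\vec f(\vec x))\leftsquigarrow V(\vec x)$ with $L$ a concept or role name, $\vec f(\vec x)$ a tuple of terms each of the form $g(\vec y)$ ($g$ a function symbol, $\vec y\subseteq\vec x$), and $V$ a view name with extension $V^{\mathcal{D}}$ given by a query over $\Sigma$. Signature: $\mathrm{sign}(m)=(L,\vec f)$. Unfolding of a CQ $q(\vec x)\leftarrow L_1(\vec v_1),\dots,L_n(\vec v_n)$: the non-recursive Datalog query $(q_{\mathrm{unf}}(\vec x),\Pi)$ where $\Pi$ is a minimal (up to renaming) set of rules containing, for every tuple $(m_1,\dots,m_n)$ of mappings with $m_i=L_i(\vec f_i(\vec x_i))\leftsquigarrow V_i(\vec z_i)$ and every mgu $\sigma$ of $\{(L_i(\vec v_i),L_i(\vec f_i(\vec x_i)))\}$, the rule $q_{\mathrm{unf}}(\sigma(\vec x))\leftarrow V_1(\sigma(\vec z_1)),\dots,V_n(\sigma(\vec z_n))$; the sum ranges over these rules viewed as CQs $q_u$.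 Wrap: for each signature $(L,\vec f)$, the mappings of that signature $\{L(\vec f(\vec v_i))\leftsquigarrow V_i(\vec v_i)\}_i$ are replaced by the single mapping $L(\vec f(\vec v))\leftsquigarrow W(\vec v)$ with $W$ a fresh view for $(W(\vec v),\{W(\vec v_i)\leftarrow V_i(\vec v_i)\}_i)$; $\mathrm{wrap}(\mathcal{M})$ is the union over all signatures. Answer template matrix: if the rules of an unfolding are $q_{\mathrm{unf}}(\vec f_j(\vec y_j))\leftarrow V^j_1,\dots,V^j_n$ for $1\le j\le m$, where $\vec f_j$ is the tuple of function symbols occurring in the head, then $\mathrm{atm}(q_{\mathrm{unf}})$ is the matrix whose rows are $\vec f_1,\dots,\vec f_m$. *)

From mathcomp Require Import all_boot.
From Stdlib Require List.
Set Implicit Arguments.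
Unset Strict Implicit.
Unset Printing Implicit Defensive.

(*   Lname : eqType  -- concept and role names                         *)
(*   F     : eqType  -- function symbols                               *)
(*   Vname : Type    -- view names                                     *)
(*   C     : Type    -- constants of the database                      *)

(* Variables of unfolded rules: (0, x) is the query variable x; (i.+1, y)
   is the variable y of the i-th mapping of a tuple (renaming apart). *)
Definition var := (nat * nat)%type.

Inductive term (F : Type) :=
| TVar (v : var)
| TFun (g : F) (args : seq (term F)).
Arguments TVar {F} v.

Fixpoint subst (F : Type) (s : var -> term F) (t : term F) : term F :=
  match t with
  | TVar v => s v
  | TFun g ts => TFun g (map (subst s) ts)
  end.

(* A mapping  L(g_1(y_1),...,g_k(y_k)) ~> V(z)  with view of type VT;
   mapping variables are natural numbers. *)
Record mapping (Lname F VT : Type) := Mapping {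
  mL  : Lname;
  mts : seq (F * seq nat);
  mV  : VT;
  mzs : seq nat
}.

Record cq (Lname : Type) := CQ {
  qhead : seq nat;
  qbody : seq (Lname * seq nat)
}.

Record rule (F VT : Type) := Rule {
  rhead : seq (term F);
  rbody : seq (VT * seq (term F))
}.

Section Unfolding.
Variables (Lname F VT : Type).

Definition qterm (v : nat) : term F := TVar (0, v).
Definition mterm (i : nat) (p : F * seq nat) : term F :=
  TFun p.1 (map (fun y => TVar (i.+1, y)) p.2).

Definition unifier (q : cq Lname) (ms : seq (mapping Lname F VT))
    (s : var -> term F) : Prop :=
  size ms = size (qbody q) /\
  forall i L vs m,
    List.nth_error (qbody q) i = Some (L, vs) ->
    List.nth_error ms i = Some m ->
    L = mL m /\
    List.Forall2 (fun v t => subst s (qterm v) = subst s (mterm i t))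
                 vs (mts m).

Definition mgu q ms (s : var -> term F) : Prop :=
  unifier q ms s /\
  forall th, unifier q ms th -> exists r, forall x, th x = subst r (s x).

Definition unf_rule (q : cq Lname) (ms : seq (mapping Lname F VT))
    (s : var -> term F) : rule F VT :=
  Rule (map (fun x => subst s (qterm x)) (qhead q))
       (map (fun im : nat * mapping Lname F VT =>
               (mV im.2, map (fun z => s (im.1.+1, z)) (mzs im.2)))
            (zip (iota 0 (size ms)) ms)).

Definition generated (q : cq Lname) (M : seq (mapping Lname F VT))
    (r : rule F VT) : Prop :=
  exists ms s, List.Forall (fun m => List.In m M) ms /\ mgu q ms s /\
               r = unf_rule q ms s.

(* equality of rules up to a (bijective) renaming of variables;
   rule bodies are conjunctions, compared as sets of atoms *)
Definition ren (rho : var -> var) (t : term F) : term F :=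
  subst (fun v => TVar (rho v)) t.

Definition rule_equiv (r1 r2 : rule F VT) : Prop :=
  exists rho rho' : var -> var, cancel rho rho' /\ cancel rho' rho /\
    rhead r2 = map (ren rho) (rhead r1) /\
    forall a, List.In a (rbody r2) <->
              List.In a (map (fun a : VT * seq (term F) =>
                                (a.1, map (ren rho) a.2)) (rbody r1)).

(* Pi is the rule set of unf(q, M): a minimal (up to renaming) set of rules
   containing (up to renaming) every generated rule. *)
Definition is_unfolding (q : cq Lname) (M : seq (mapping Lname F VT))
    (Pi : seq (rule F VT)) : Prop :=
  (forall r, generated q M r -> exists r', List.In r' Pi /\ rule_equiv r r') /\
  (forall r', List.In r' Pi -> exists r, generated q M r /\ rule_equiv r r') /\
  (forall i j r1 r2, List.nth_error Pi i = Some r1 ->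
     List.nth_error Pi j = Some r2 -> rule_equiv r1 r2 -> i = j).

Definition head_sym (t : term F) : option F :=
  match t with TFun g _ => Some g | TVar _ => None end.
Definition atm (Pi : seq (rule F VT)) : seq (seq (option F)) :=
  map (fun r => map head_sym (rhead r)) Pi.

End Unfolding.

(* values: ground terms over constants (constants and objects f(c)) *)
Inductive val (F C : Type) :=
| VC (c : C)
| VF (g : F) (args : seq (val F C)).
Arguments VC {F C} c.

Fixpoint evalt (F C : Type) (nu : var -> C) (t : term F) : val F C :=
  match t with
  | TVar v => VC (nu v)
  | TFun g ts => VF g (map (evalt nu) ts)
  end.

Definition rule_ans (F VT C : Type) (ext : VT -> seq C -> Prop)
    (r : rule F VT) (t : seq (val F C)) : Prop :=
  exists nu : var -> C,
    (forall V ts, List.In (V, ts) (rbody r) ->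
       exists c, ext V c /\ map (evalt nu) ts = map VC c) /\
    t = map (evalt nu) (rhead r).

Definition prog_ans (F VT C : Type) (ext : VT -> seq C -> Prop)
    (Pi : seq (rule F VT)) (t : seq (val F C)) : Prop :=
  exists r, List.In r Pi /\ rule_ans ext r t.

Definition has_card (T : Type) (P : T -> Prop) (n : nat) : Prop :=
  exists s : seq T, List.NoDup s /\ (forall x, List.In x s <-> P x) /\ size s = n.

Section Wrap.
Variables (Lname F : eqType) (Vname : Type).

Definition signature := (Lname * seq (F * nat))%type.

Definition sign (m : mapping Lname F Vname) : signature :=
  (mL m, map (fun p => (p.1, size p.2)) (mts m)).

Fixpoint canon_ts (off : nat) (sh : seq (F * nat)) : seq (F * seq nat) :=
  match sh with
  | [::] => [::]
  | (g, k) :: sh' => (g, iota off k) :: canon_ts (off + k) sh'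
  end.

(* the single mapping L(f(v)) ~> W(v) of a signature; the fresh view W is
   named by the signature itself *)
Definition wrap_map (s : signature) : mapping Lname F signature :=
  Mapping s.1 (canon_ts 0 s.2) s (iota 0 (sumn (map snd s.2))).

Definition wrapM (M : seq (mapping Lname F Vname)) : seq (mapping Lname F signature) :=
  map wrap_map (undup (map sign M)).

(* extension of the fresh view W of signature s: the Datalog query
   (W(v), {W(v_i) <- V_i(z_i)}_i), v_i the arguments of the target terms *)
Definition wrap_ext (C : Type) (extD : Vname -> seq (seq C))
    (M : seq (mapping Lname F Vname)) (s : signature) (c : seq C) : Prop :=
  exists m, List.In m M /\ sign m = s /\
    exists nu : nat -> C, List.In (map nu (mzs m)) (extD (mV m)) /\
                          c = map nu (flatten (map snd (mts m))).

End Wrap.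

Definition base_ext (Vname C : Type) (extD : Vname -> seq (seq C))
  (V : Vname) (c : seq C) : Prop := List.In c (extD V).

Definition arity (Lname : Type) (isRole : Lname -> bool) (L : Lname) : nat :=
  if isRole L then 2 else 1.

Definition wf_mapping (Lname F VT : Type) (isRole : Lname -> bool)
    (m : mapping Lname F VT) : Prop :=
  size (mts m) = arity isRole (mL m) /\
  forall p, List.In p (mts m) -> forall y, List.In y p.2 -> List.In y (mzs m).

Definition wf_cq (Lname : Type) (isRole : Lname -> bool) (q : cq Lname) : Prop :=
  (forall L vs, List.In (L, vs) (qbody q) -> size vs = arity isRole L) /\
  (forall x, List.In x (qhead q) ->
     exists L vs, List.In (L, vs) (qbody q) /\ List.In x vs).

(* The answers of unf(q, M) are exactly the "ground matches" of q over M: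
   one mapping per body atom, a tuple of the view of each mapping, and
   values of the query variables agreeing with the mapping templates.  A
   ground match yields a unifier, hence an mgu (unification here only
   identifies mapping variables), hence a rule of the unfolding producing
   the same answer.  Ground matches over M and over wrap(M) translate into
   each other, as a mapping and its wrapper build the same objects, so
   unf(q, M) and unf(q, wrap(M)) have the same answers.  An answer of a rule
   of unf(q, wrap(M)) exhibits that rule's row of the answer template matrix
   as the function symbols of its components, so distinct rows have disjoint
   answer sets; these are finite, and their sizes add up. *)

From Pilot Require Import Defs.
From mathcomp Require Import all_boot.
From Stdlib Require List.
From Stdlib Require ClassicalEpsilon FunctionalExtensionality PropExtensionality.

Set Implicit Arguments.
Unset Strict Implicit.
Unset Printing Implicit Defensive.

Lemma In_mem (T : eqType) (x : T) s : List.In x s <-> x \in s.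
Proof.
elim: s => [|a s IH] //=; rewrite in_cons; split.
- by move=> [->|/IH ->]; rewrite ?eqxx ?orbT.
- by case/orP=> [/eqP ->|/IH]; [left|right].
Qed.

Lemma nth_error_size (A : Type) (l : seq A) i x :
  List.nth_error l i = Some x -> i < size l.
Proof. by elim: l i => [|a l IH] [|i] //= /IH. Qed.

Lemma nth_error_same_size (A B : Type) (l1 : seq A) (l2 : seq B) i x :
  size l1 = size l2 -> List.nth_error l1 i = Some x ->
  exists y, List.nth_error l2 i = Some y.
Proof.
move=> Hs Hx; have := nth_error_size Hx; rewrite Hs {Hs Hx}.
by elim: l2 i => [|b l2 IH] [|i] //=; [exists b | move/IH].
Qed.

Lemma nth_error_seq_map (A B : Type) (f : A -> B) (l : seq A) i :
  List.nth_error (map f l) i = option_map f (List.nth_error l i).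
Proof. exact: List.nth_error_map. Qed.

Lemma nth_error_map_inv (A B : Type) (f : A -> B) (l : seq A) i y :
  List.nth_error (map f l) i = Some y ->
  exists2 x, List.nth_error l i = Some x & y = f x.
Proof. by rewrite nth_error_seq_map; case: List.nth_error => //= x [<-]; exists x. Qed.

Lemma In_zip_iota (A : Type) (l : seq A) k i m :
  List.In (i, m) (zip (iota k (size l)) l) <->
  k <= i /\ List.nth_error l (i - k) = Some m.
Proof.
elim: l k => [|a l IH] k /=.
  by split=> // -[_]; case: (i - k).
rewrite IH; split.
- case=> [[<- <-]|[ki Hi]]; first by rewrite subnn.
  by rewrite ltnW // subnS in Hi *; rewrite -[i - k]prednK ?subn_gt0.
- case; rewrite leq_eqVlt => /orP [/eqP <-|ki]; first by rewrite subnn => -[<-]; left.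
  by rewrite -[i - k]prednK ?subn_gt0 //= -subnS => Hi; right.
Qed.

Lemma In_zip_iota0 (A : Type) (l : seq A) i m :
  List.In (i, m) (zip (iota 0 (size l)) l) <-> List.nth_error l i = Some m.
Proof. by rewrite In_zip_iota subn0; split=> [[]|]. Qed.

Lemma Forall2_zip (A B : Type) (R : A -> B -> Prop) l1 l2 :
  List.Forall2 R l1 l2 <->
  size l1 = size l2 /\ forall a b, List.In (a, b) (zip l1 l2) -> R a b.
Proof.
elim: l1 l2 => [|a l1 IH] [|b l2] /=; split; try by [constructor | case | inversion 1].
- inversion 1; subst; have [-> H2] := (IH l2).1 H5.
  by split=> // a' b' [[<- <-]|/H2].
- case=> [[Hs] H]; constructor; first by apply: H; left.
  by apply/IH; split=> // a' b' Hi; apply: H; right.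
Qed.

Lemma Forall2_in_left (A B : Type) (R : A -> B -> Prop) l1 l2 a :
  List.Forall2 R l1 l2 -> List.In a l1 -> exists2 b, List.In b l2 & R a b.
Proof.
elim=> [|x y l1' l2' Rxy _ IH] //= [<-|/IH [b Hb Rab]]; first by exists y; [left|].
by exists b; [right|].
Qed.

Lemma Forall2_conj (A B : Type) (R1 R2 : A -> B -> Prop) l1 l2 :
  List.Forall2 R1 l1 l2 -> List.Forall2 R2 l1 l2 ->
  List.Forall2 (fun a b => R1 a b /\ R2 a b) l1 l2.
Proof. by elim=> [|x y l1' l2' H1 _ IH] H2; inversion H2; constructor; auto. Qed.

Lemma Forall2_impl_in (A B : Type) (R R' : A -> B -> Prop) l1 l2 :
  (forall a b, List.In b l2 -> R a b -> R' a b) ->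
  List.Forall2 R l1 l2 -> List.Forall2 R' l1 l2.
Proof.
move=> H HR; elim: HR H => [|x y l1' l2' Rxy _ IH] H; constructor.
- by apply: H; [left|].
- by apply: IH => a b Hb; apply: H; right.
Qed.

Lemma Forall2_compose (A B D : Type) (R1 : A -> B -> Prop) (R2 : B -> D -> Prop)
    (R : A -> D -> Prop) l1 l2 l3 :
  (forall a b c, R1 a b -> R2 b c -> R a c) ->
  List.Forall2 R1 l1 l2 -> List.Forall2 R2 l2 l3 -> List.Forall2 R l1 l3.
Proof.
move=> H H12; elim: H12 l3 => [|x y l1' l2' R1xy _ IH] l3 H23; inversion H23;
  constructor; [exact: H R1xy _ | exact: IH].
Qed.

Lemma Forall_of_nth_error (A : Type) (P : A -> Prop) l :
  (forall i x, List.nth_error l i = Some x -> P x) -> List.Forall P l.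
Proof.
move=> H; apply/List.Forall_forall => x /(List.In_nth_error _ _) [i Hi]; exact: H Hi.
Qed.

Lemma cat_inj (A : Type) (a b c d : seq A) :
  size a = size c -> a ++ b = c ++ d -> a = c /\ b = d.
Proof.
move=> Hs H; have := congr1 (take (size a)) H; have := congr1 (drop (size a)) H.
by rewrite drop_size_cat // take_size_cat // Hs drop_size_cat // take_size_cat.
Qed.

Lemma nth_error_choice (A X : Type) (P : nat -> A -> X -> Prop) (l : seq A) :
  (forall i a, List.nth_error l i = Some a -> exists x, P i a x) ->
  exists xs : seq X, size xs = size l /\
    forall i a x, List.nth_error l i = Some a -> List.nth_error xs i = Some x -> P i a x.
Proof.
elim: l P => [|a l IH] P H; first by exists [::]; split=> // [] [].
have [x Hx] := H 0 a erefl.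
have [xs [Hs Hxs]] := IH (fun i => P i.+1) (fun i b Hb => H i.+1 b Hb).
exists (x :: xs); split; first by rewrite /= Hs.
by move=> [|i] b y /= => [[<-] [<-]|]; [| apply: Hxs].
Qed.

Fixpoint seqs_over (A : Type) (V : seq A) (n : nat) : seq (seq A) :=
  if n is n'.+1 then List.flat_map (fun x => map (cons x) (seqs_over V n')) V
  else [:: [::]].

Lemma seqs_over_complete (A : Type) (V t : seq A) :
  (forall x, List.In x t -> List.In x V) -> List.In t (seqs_over V (size t)).
Proof.
elim: t => [|a t IH] H /=; first by left.
apply/List.in_flat_map; exists a; split; first by apply: H; left.
by apply: List.in_map; apply: IH => x Hx; apply: H; right.
Qed.

Lemma has_card_bounded (A : Type) (P : A -> Prop) (l : seq A) :
  (forall x, P x -> List.In x l) -> exists n, has_card P n.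
Proof.
move=> H.
have decP x : {P x} + {~ P x} := ClassicalEpsilon.excluded_middle_informative (P x).
have deq (x y : A) : {x = y} + {x <> y} := ClassicalEpsilon.excluded_middle_informative _.
pose s := List.nodup deq (List.filter (fun x => if decP x then true else false) l).
exists (size s), s; split; first exact: List.NoDup_nodup.
split=> // x; rewrite List.nodup_In List.filter_In.
by case: (decP x) => Px; split=> [[]|] //; split=> //; apply: H.
Qed.

Lemma has_card_iff (A : Type) (P Q : A -> Prop) n :
  (forall x, P x <-> Q x) -> has_card P n -> has_card Q n.
Proof. by move=> PQ [s [Us [Ps <-]]]; exists s; split=> //; split=> // x; rewrite Ps. Qed.

Lemma has_card_disjoint_or (A : Type) (P Q : A -> Prop) m n :
  (forall x, P x -> Q x -> False) -> has_card P m -> has_card Q n ->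
  has_card (fun x => P x \/ Q x) (m + n).
Proof.
move=> PQ [s [Us [Ps <-]]] [t [Ut [Qt <-]]]; exists (s ++ t); split; [|split].
- by apply: List.NoDup_app => // x /Ps Px /Qt; apply: PQ.
- by move=> x; rewrite List.in_app_iff Ps Qt.
- by rewrite size_cat.
Qed.

Lemma has_card_bigcup (R A : Type) (P : R -> A -> Prop) (rs : seq R) (bound : seq A) :
  (forall r x, List.In r rs -> P r x -> List.In x bound) ->
  (forall i j ri rj x, List.nth_error rs i = Some ri -> List.nth_error rs j = Some rj ->
     P ri x -> P rj x -> i = j) ->
  exists ns : seq nat, size ns = size rs /\
    (forall i r n, List.nth_error rs i = Some r -> List.nth_error ns i = Some n ->
       has_card (P r) n) /\
    has_card (fun x => exists r, List.In r rs /\ P r x) (sumn ns).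
Proof.
elim: rs => [|r rs IH] Hb Hd.
  exists [::]; split=> //; split=> [[]|] //.
  by exists [::]; split; [constructor | split=> // x; split=> [[]|[r []]]].
have [n Hn] := has_card_bounded (fun x => Hb r x (or_introl erefl)).
have [ns [Hs [Hns Hu]]] := IH (fun r' x Hr' => Hb r' x (or_intror Hr'))
  (fun i j ri rj x Hi Hj Pi Pj => succn_inj (Hd i.+1 j.+1 ri rj x Hi Hj Pi Pj)).
exists (n :: ns); split; first by rewrite /= Hs.
split; first by case=> [|i] r' n' /= => [[<-] [<-]|]; [| apply: Hns].
apply: has_card_iff (has_card_disjoint_or _ Hn Hu).
  move=> x; split=> [[Px|[r' [Hr' Px]]]|[r' [[<-|Hr'] Px]]].
  - by exists r; split; [left|].
  - by exists r'; split; [right|].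
  - by left.
  - by right; exists r'.
move=> x Px [r' [/(List.In_nth_error _ _) [j Hj] Px']].
by have := Hd 0 j.+1 r r' x erefl Hj Px Px'.
Qed.

Section Terms.
Variable F : Type.

Fixpoint term_nested_ind (P : term F -> Prop) (HV : forall v, P (TVar v))
    (HF : forall g ts, List.Forall P ts -> P (TFun g ts)) (t : term F) : P t :=
  match t with
  | TVar v => HV v
  | TFun g ts => HF g ts ((fix go (l : seq (term F)) : List.Forall P l :=
        if l is x :: l' then List.Forall_cons _ (term_nested_ind HV HF x) (go l')
        else List.Forall_nil _) ts)
  end.

Lemma evalt_ren (C : Type) (nu : var -> C) rho (t : term F) :
  evalt nu (ren rho t) = evalt (fun x => nu (rho x)) t.
Proof.
elim/term_nested_ind: t => [v|g ts IH] //=.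
rewrite -map_comp; congr VF; apply: List.map_ext_in => t.
exact: (proj1 (List.Forall_forall _ _) IH).
Qed.

Lemma subst_qterm (s : var -> term F) v : subst s (qterm F v) = s (0, v).
Proof. by []. Qed.

Lemma subst_mterm (s : var -> term F) i (p : F * seq nat) :
  subst s (mterm i p) = TFun p.1 (map (fun y => s (i.+1, y)) p.2).
Proof. by rewrite /mterm /= -map_comp. Qed.

End Terms.

Lemma rule_equiv_ans (F VT C : Type) (ext : VT -> seq C -> Prop) (r1 r2 : rule F VT) t :
  rule_equiv r1 r2 -> rule_ans ext r1 t <-> rule_ans ext r2 t.
Proof.
move=> [rho [rho' [K1 [K2 [Hh Hb]]]]]; split=> -[nu [Hbody ->]].
- have E : (fun x => nu (rho' (rho x))) = nu.
    by apply: FunctionalExtensionality.functional_extensionality => x; rewrite K1.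
  exists (fun x => nu (rho' x)); split.
  + move=> V ts /Hb /List.in_map_iff [[V1 ts1] [[<- <-] /Hbody [c [Hc Hm]]]].
    by exists c; split=> //; rewrite -map_comp -Hm; apply: eq_map => x /=; rewrite evalt_ren E.
  + by rewrite Hh -map_comp; apply: eq_map => x /=; rewrite evalt_ren E.
- exists (fun x => nu (rho x)); split.
  + move=> V ts Hin.
    have /Hbody [c [Hc Hm]] : List.In (V, map (ren rho) ts) (rbody r2).
      by apply/Hb/List.in_map_iff; exists (V, ts).
    by exists c; split=> //; rewrite -Hm -map_comp; apply: eq_map => x /=; rewrite evalt_ren.
  + by rewrite Hh -map_comp; apply: eq_map => x /=; rewrite evalt_ren.
Qed.

Section GroundMatches.
Variables (Lname F VT C : Type).
Implicit Types (ext : VT -> seq C -> Prop) (q : cq Lname) (ms : seq (mapping Lname F VT)).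

Definition ground_match ext q ms (nu : var -> C) (gq : nat -> Defs.val F C)
    (t : seq (Defs.val F C)) : Prop :=
  size ms = size (qbody q) /\
  (forall i L vs m, List.nth_error (qbody q) i = Some (L, vs) ->
     List.nth_error ms i = Some m ->
     L = mL m /\
     List.Forall2 (fun v p => gq v = VF p.1 (map (fun y => VC (nu (i.+1, y))) p.2))
       vs (mts m)) /\
  (forall i m, List.nth_error ms i = Some m ->
     ext (mV m) (map (fun z => nu (i.+1, z)) (mzs m))) /\
  t = map gq (qhead q).

Definition ground_answer ext q ms t := exists nu gq, ground_match ext q ms nu gq t.

Definition safe_mappings (M : seq (mapping Lname F VT)) :=
  forall m, List.In m M ->
  forall p, List.In p (mts m) -> forall y, List.In y p.2 -> List.In y (mzs m).

Definition safe_head q := forall x, List.In x (qhead q) ->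
  exists L vs, List.In (L, vs) (qbody q) /\ List.In x vs.

Lemma unf_rule_body_In q ms (s : var -> term F) i m :
  List.nth_error ms i = Some m ->
  List.In (mV m, map (fun z => s (i.+1, z)) (mzs m)) (rbody (unf_rule q ms s)).
Proof. by move=> Hm; apply/List.in_map_iff; exists (i, m); rewrite In_zip_iota0. Qed.

Lemma unf_rule_ans_ground ext q ms (s : var -> term F) t :
  unifier q ms s -> safe_mappings ms -> rule_ans ext (unf_rule q ms s) t ->
  ground_answer ext q ms t.
Proof.
move=> [Hsz Hu] Hsafe [nu [Hbody Ht]].
pose nu' w := if evalt nu (s w) is VC c then c else nu w.
have Enu' i m z : List.nth_error ms i = Some m -> List.In z (mzs m) ->
    evalt nu (s (i.+1, z)) = VC (nu' (i.+1, z)).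
  move=> Hm Hz; have [c [_ Hc]] := Hbody _ _ (unf_rule_body_In q s Hm).
  have : List.In (evalt nu (s (i.+1, z))) (map VC c).
    by rewrite -Hc -map_comp; apply: (List.in_map (fun z => evalt nu (s (i.+1, z)))).
  by case/List.in_map_iff=> c' [E _]; rewrite /nu' -E.
exists nu', (fun x => evalt nu (s (0, x))); split=> //; split; [|split].
- move=> i L vs m Hq Hm; have [HL HF] := Hu _ _ _ _ Hq Hm; split=> //.
  apply: Forall2_impl_in HF => v p Hp; rewrite subst_qterm subst_mterm => ->.
  rewrite /= -map_comp; congr VF; apply: List.map_ext_in => y Hy /=.
  exact: Enu' Hm (Hsafe m (List.nth_error_In _ _ Hm) p Hp y Hy).
- move=> i m Hm; have [c [Hc Hm2]] := Hbody _ _ (unf_rule_body_In q s Hm).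
  suff -> : map (fun z => nu' (i.+1, z)) (mzs m) = c by [].
  apply: (@inj_map _ _ (@VC F C)); first by move=> ? ? [].
  rewrite -Hm2 -!map_comp; apply: List.map_ext_in => z Hz /=.
  by rewrite (Enu' _ _ _ Hm Hz).
- by rewrite Ht /= -map_comp.
Qed.

Fixpoint val_term (e : C -> var) (x : Defs.val F C) : term F :=
  match x with VC c => TVar (e c) | VF g xs => TFun g (map (val_term e) xs) end.

(* The unifier reads each value back as a term, with every constant c
   replaced by a mapping variable that nu sends to c. *)
Lemma ground_match_unifier ext q ms nu gq t :
  ground_match ext q ms nu gq t ->
  exists2 th, unifier q ms th &
    forall w, w.1 <> 0 -> exists2 u, th w = TVar u & nu u = nu w.
Proof.
move=> [Hsz [Hf _]].
pose var_of c := ClassicalEpsilon.epsilon (inhabits (0, 0)) (fun w => nu w = c).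
pose th (w : var) := if w.1 is 0 then val_term var_of (gq w.2) else TVar (var_of (nu w)).
exists th.
  split=> // i L vs m Hq Hm; have [HL HF] := Hf _ _ _ _ Hq Hm; split=> //.
  by apply: List.Forall2_impl HF => v p E; rewrite subst_qterm subst_mterm /th /= E /= -map_comp.
move=> [[|k] y] //= _; exists (var_of (nu (k.+1, y))) => //.
by apply: (ClassicalEpsilon.epsilon_spec _ (fun w => nu w = nu (k.+1, y))); exists (k.+1, y).
Qed.

Section CanonicalMgu.
Variables (q : cq Lname) (ms : seq (mapping Lname F VT)) (th0 : var -> term F).
Hypothesis unifier_th0 : unifier q ms th0.

(* The mgu sends each variable to a chosen representative of "equal under
   all unifiers", and each matched query variable to its template over
   these representatives. *)
Definition unif_eq (w1 w2 : var) := forall th, unifier q ms th -> th w1 = th w2.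

Definition unif_rep (w : var) := ClassicalEpsilon.epsilon (inhabits (0, 0)) (unif_eq ^~ w).

Lemma unif_rep_eq w : unif_eq (unif_rep w) w.
Proof. by apply: (ClassicalEpsilon.epsilon_spec _ (unif_eq ^~ w)); exists w. Qed.

Lemma unif_rep_congr w1 w2 : unif_eq w1 w2 -> unif_rep w1 = unif_rep w2.
Proof.
move=> E12; rewrite /unif_rep; congr ClassicalEpsilon.epsilon.
apply: FunctionalExtensionality.functional_extensionality => u.
by apply: PropExtensionality.propositional_extensionality; split=> H th Hth;
  rewrite (H th Hth) (E12 th Hth).
Qed.

Definition template_of (x : nat) (T : term F) := exists i L vs m p,
  [/\ List.nth_error (qbody q) i = Some (L, vs), List.nth_error ms i = Some m,
      List.In (x, p) (zip vs (mts m))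
    & T = TFun p.1 (map (fun y => TVar (unif_rep (i.+1, y))) p.2)].

Definition canonical_mgu (w : var) : term F :=
  if w.1 is 0 then
    if ClassicalEpsilon.excluded_middle_informative (exists T, template_of w.2 T)
    then ClassicalEpsilon.epsilon (inhabits (TVar (0, 0))) (template_of w.2)
    else TVar (unif_rep w)
  else TVar (unif_rep w).

Lemma unifier_matched th i L vs m x p : unifier q ms th ->
  List.nth_error (qbody q) i = Some (L, vs) -> List.nth_error ms i = Some m ->
  List.In (x, p) (zip vs (mts m)) ->
  th (0, x) = TFun p.1 (map (fun y => th (i.+1, y)) p.2).
Proof.
move=> [_ Hu] Hq Hm Hxp; have [_ /Forall2_zip [_ HF]] := Hu _ _ _ _ Hq Hm.
by have := HF _ _ Hxp; rewrite subst_qterm subst_mterm.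
Qed.

Lemma map_unif_rep (f1 f2 : nat -> var) l1 l2 :
  (forall th, unifier q ms th ->
     map (fun y => th (f1 y)) l1 = map (fun y => th (f2 y)) l2) ->
  map (fun y => TVar (unif_rep (f1 y))) l1 = map (fun y => TVar (unif_rep (f2 y))) l2
    :> seq (term F).
Proof.
elim: l1 l2 => [|a l1 IH] [|b l2] E //; try by have := E th0 unifier_th0.
rewrite /= (@unif_rep_congr (f1 a) (f2 b)) ?(IH l2) // => th Hth;
  by case: (E th Hth).
Qed.

Lemma template_of_uniq x T1 T2 : template_of x T1 -> template_of x T2 -> T1 = T2.
Proof.
move=> [i1 [L1 [vs1 [m1 [p1 [Hq1 Hm1 Hx1 ->]]]]]] [i2 [L2 [vs2 [m2 [p2 [Hq2 Hm2 Hx2 ->]]]]]].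
have E th : unifier q ms th ->
    TFun p1.1 (map (fun y => th (i1.+1, y)) p1.2) =
    TFun p2.1 (map (fun y => th (i2.+1, y)) p2.2).
  by move=> Hth; rewrite -(unifier_matched Hth Hq1 Hm1 Hx1) -(unifier_matched Hth Hq2 Hm2 Hx2).
case: (E th0 unifier_th0) => -> _; congr TFun.
by apply: map_unif_rep => th /E [].
Qed.

Lemma canonical_mgu_unifier : unifier q ms canonical_mgu.
Proof.
have [Hsz Hu] := unifier_th0; split=> // i L vs m Hq Hm.
have [HL /Forall2_zip [Hs _]] := Hu _ _ _ _ Hq Hm; split=> //.
apply/Forall2_zip; split=> // v p Hvp; rewrite subst_qterm subst_mterm.
have HT : template_of v (TFun p.1 (map (fun y => TVar (unif_rep (i.+1, y))) p.2)).
  by exists i, L, vs, m, p.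
rewrite /canonical_mgu /=; case: ClassicalEpsilon.excluded_middle_informative => [Hex|[]];
  last by eexists; exact: HT.
exact: template_of_uniq (ClassicalEpsilon.epsilon_spec _ _ Hex) HT.
Qed.

Lemma canonical_mgu_mgu : mgu q ms canonical_mgu.
Proof.
split=> [|th Hth]; first exact: canonical_mgu_unifier.
exists th => -[[|k] y]; rewrite /canonical_mgu /=; last by rewrite (unif_rep_eq _ Hth).
case: ClassicalEpsilon.excluded_middle_informative => Hex; last by rewrite /= (unif_rep_eq _ Hth).
have := ClassicalEpsilon.epsilon_spec (inhabits (TVar (0, 0))) _ Hex.
move: (ClassicalEpsilon.epsilon _ _) => T [i [L [vs [m [p [Hq Hm Hyp ->]]]]]].
rewrite (unifier_matched Hth Hq Hm Hyp) /= -map_comp; congr TFun; apply: eq_map => z /=.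
by rewrite (unif_rep_eq _ Hth).
Qed.

End CanonicalMgu.

Lemma mgu_exists q ms (th : var -> term F) : unifier q ms th -> exists s, mgu q ms s.
Proof. by move=> Hth; exists (canonical_mgu q ms); apply: canonical_mgu_mgu Hth. Qed.

Lemma mgu_rule_ans ext q ms (s : var -> term F) nu gq t :
  safe_head q -> mgu q ms s -> ground_match ext q ms nu gq t ->
  rule_ans ext (unf_rule q ms s) t.
Proof.
move=> Hhead [[_ Hs] Hmost] HG; have [Hsz [Hf [Hb Ht]]] := HG.
have [th Hth Hth_var] := ground_match_unifier HG.
have [r Hr] := Hmost th Hth.
pose nu' w := if r w is TVar u then nu u else nu w.
have Enu' w : w.1 <> 0 -> evalt nu' (s w) = VC (nu w).
  move=> Hw; have [u E1 E2] := Hth_var w Hw.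
  by move: (Hr w); rewrite E1; case: (s w) => [w'|g ts] //= E; rewrite /nu' -E E2.
exists nu'; split.
- move=> V ts /List.in_map_iff [[i m] [[<- <-] /In_zip_iota0 Hm]] /=.
  exists (map (fun z => nu (i.+1, z)) (mzs m)); split; first exact: Hb.
  by rewrite -!map_comp; apply: eq_map => z /=; rewrite Enu'.
- rewrite Ht /= -map_comp; apply: List.map_ext_in => x.
  move=> /Hhead [L [vs [/(List.In_nth_error _ _) [i Hq] Hxv]]] /=.
  have [m Hm] := nth_error_same_size (esym Hsz) Hq.
  have [_ HF1] := Hf _ _ _ _ Hq Hm; have [_ HF2] := Hs _ _ _ _ Hq Hm.
  have [p _ [-> E2]] := Forall2_in_left (Forall2_conj HF1 HF2) Hxv.
  rewrite subst_qterm subst_mterm in E2; rewrite E2 /= -map_comp; congr VF.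
  by apply: eq_map => y /=; rewrite Enu'.
Qed.

Lemma unfolding_ans_ground ext q (M : seq (mapping Lname F VT)) Pi t :
  is_unfolding q M Pi -> safe_mappings M -> safe_head q ->
  prog_ans ext Pi t <->
  exists2 ms, List.Forall (fun m => List.In m M) ms & ground_answer ext q ms t.
Proof.
move=> [Hcomplete [Hsound _]] HM Hhead; split.
- move=> [r' [/Hsound [r [[ms [s [Hms [Hmgu ->]]]] Heq]] /(rule_equiv_ans ext t Heq) Ha]].
  exists ms => //; apply: unf_rule_ans_ground (proj1 Hmgu) _ Ha.
  by move=> m Hm; apply/HM/(proj1 (List.Forall_forall _ _) Hms).
- move=> [ms Hms [nu [gq HG]]]; have [th Hth _] := ground_match_unifier HG.
  have [s Hs] := mgu_exists Hth.
  have [|r' [Hr' Heq]] := Hcomplete (unf_rule q ms s); first by exists ms, s.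
  by exists r'; split=> //; apply/(rule_equiv_ans ext t Heq)/(mgu_rule_ans Hhead Hs HG).
Qed.

End GroundMatches.

Section Wrapping.
Variables (Lname F : eqType) (Vname C : Type).
Implicit Types (P : seq (F * seq nat)) (M : seq (mapping Lname F Vname)).

Definition term_shape P : seq (F * nat) := map (fun p => (p.1, size p.2)) P.

Lemma sumn_term_shape P : sumn (map snd (term_shape P)) = size (flatten (map snd P)).
Proof. by rewrite size_flatten /shape -!map_comp. Qed.

Lemma canon_ts_match P off (h g : nat -> C) :
  map h (iota off (sumn (map snd (term_shape P)))) = map g (flatten (map snd P)) ->
  List.Forall2 (fun p' p => p'.1 = p.1 /\ map h p'.2 = map g p.2)
    (canon_ts off (term_shape P)) P.
Proof.
elim: P off => [|[f ys] P IH] off /= H; first by constructor.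
rewrite iotaD !map_cat in H.
have [|E1 E2] := cat_inj _ H; first by rewrite !size_map size_iota.
by constructor; [split | apply: IH].
Qed.

Lemma canon_ts_range off (sh : seq (F * nat)) p y :
  List.In p (canon_ts off sh) -> List.In y p.2 -> off <= y < off + sumn (map snd sh).
Proof.
elim: sh off => [|[g k] sh IH] off //= [<-|/IH H] /In_mem.
- by rewrite mem_iota => /andP [-> /leq_trans ->] //; rewrite leq_add2l leq_addr.
- by move=> /In_mem /H /andP [H1 H2]; rewrite addnA H2 (leq_trans _ H1) ?leq_addr.
Qed.

Lemma safe_wrapM M : safe_mappings (wrapM M).
Proof.
move=> _ /List.in_map_iff [s [<- _]] p Hp y Hy /=.
by apply/In_mem; rewrite mem_iota; apply: canon_ts_range Hp Hy.
Qed.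

Lemma wrap_map_In M m : List.In m M -> List.In (wrap_map (sign m)) (wrapM M).
Proof.
move=> Hm; apply: List.in_map; apply/In_mem; rewrite mem_undup.
by apply/In_mem; apply: List.in_map.
Qed.

Lemma wrapM_wrap_map M m : List.In m (wrapM M) -> m = wrap_map (mV m).
Proof. by move=> /List.in_map_iff [s [<- _]]. Qed.

End Wrapping.

Section WrappedGroundAnswers.
Variables (Lname F : eqType) (Vname C : Type).
Variables (M : seq (mapping Lname F Vname)) (extD : Vname -> seq (seq C)) (q : cq Lname).

Lemma ground_answer_wrap ms t :
  List.Forall (fun m => List.In m M) ms -> ground_answer (base_ext extD) q ms t ->
  exists2 ms', List.Forall (fun m => List.In m (wrapM M)) ms' &
    ground_answer (wrap_ext extD M) q ms' t.
Proof.
move=> Hms [nu [gq [Hsz [Hf [Hb Ht]]]]].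
exists (map (fun m => wrap_map (sign m)) ms).
  apply/List.Forall_forall => _ /List.in_map_iff [m [<- Hm]].
  by apply/wrap_map_In/(proj1 (List.Forall_forall _ _) Hms).
(* wrap_map (sign m) numbers the target variables of m consecutively *)
pose vals i (m : mapping Lname F Vname) := map (fun y => nu (i.+1, y)) (flatten (map snd (mts m))).
pose nu' (w : var) :=
  if List.nth_error ms w.1.-1 is Some m then nth (nu (0, 0)) (vals w.1.-1 m) w.2 else nu w.
have Evals i m : List.nth_error ms i = Some m ->
    map (fun k => nu' (i.+1, k)) (iota 0 (sumn (map snd (term_shape (mts m))))) = vals i m.
  move=> Hm; rewrite sumn_term_shape /nu' /= Hm -(size_map (fun y => nu (i.+1, y))).
  exact: mkseq_nth.
exists nu', gq; split; first by rewrite size_map.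
split; [|split] => //.
- move=> i L vs m' Hq Hm'; have [m Hm ->] := nth_error_map_inv Hm'.
  have [HL HF] := Hf _ _ _ _ Hq Hm; split=> //.
  apply: Forall2_compose HF (List.Forall2_flip (canon_ts_match (Evals i m Hm))).
  move=> v p p' -> [-> E]; congr VF.
  by have := congr1 (map (@VC F C)) E; rewrite -!map_comp.
- move=> i m' Hm'; have [m Hm ->] := nth_error_map_inv Hm'.
  exists m; split; first exact: (proj1 (List.Forall_forall _ _) Hms m (List.nth_error_In _ _ Hm)).
  by split=> //; exists (fun y => nu (i.+1, y)); split; [exact: Hb Hm | rewrite Evals].
Qed.

Lemma ground_answer_unwrap ms' t :
  List.Forall (fun m => List.In m (wrapM M)) ms' ->
  ground_answer (wrap_ext extD M) q ms' t ->
  exists2 ms, List.Forall (fun m => List.In m M) ms & ground_answer (base_ext extD) q ms t.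
Proof.
move=> Hms' [nu' [gq [Hsz [Hf [Hb Ht]]]]].
pose unwraps i (m' : mapping Lname F (signature Lname F))
    (x : mapping Lname F Vname * (nat -> C)) :=
  [/\ List.In x.1 M, sign x.1 = mV m', List.In (map x.2 (mzs x.1)) (extD (mV x.1))
    & map (fun k => nu' (i.+1, k)) (mzs m') = map x.2 (flatten (map snd (mts x.1)))].
have [xs [Hxs_size Hxs]] := nth_error_choice (P := unwraps) (l := ms') (fun i m' Hm' =>
  let: ex_intro m (conj HmM (conj Hsg (ex_intro f (conj Hext Heq)))) := Hb i m' Hm' in
  ex_intro _ (m, f) (And4 HmM Hsg Hext Heq)).
pose nu (w : var) :=
  if w is (i.+1, y) then (if List.nth_error xs i is Some x then x.2 y else nu' w) else nu' w.
have Hget i m : List.nth_error (map fst xs) i = Some m ->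
    exists m' f, [/\ List.nth_error ms' i = Some m', List.nth_error xs i = Some (m, f)
      & unwraps i m' (m, f)].
  move=> Hm; have [[m0 f] Hx /= Em] := nth_error_map_inv Hm; subst m0.
  have [m' Hm'] := nth_error_same_size Hxs_size Hx.
  by exists m', f; split=> //; apply: Hxs Hm' Hx.
exists (map fst xs).
  by apply: Forall_of_nth_error => i m /Hget [m' [f [_ _ []]]].
exists nu, gq; split; first by rewrite size_map Hxs_size.
split; [|split] => //.
- move=> i L vs m Hq /Hget [m' [f [Hm' Hx [_ Hsg _ Heq]]]].
  have Ew : m' = wrap_map (sign m).
    rewrite Hsg; apply: wrapM_wrap_map.
    exact: (proj1 (List.Forall_forall _ _) Hms') _ (List.nth_error_In _ _ Hm').
  have [HL HF] := Hf _ _ _ _ Hq Hm'; rewrite Ew in HL HF Heq; split=> //.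
  apply: Forall2_compose HF (canon_ts_match Heq) => v p' p -> [-> E]; congr VF.
  by have := congr1 (map (@VC F C)) E; rewrite -!map_comp /nu /= Hx.
- move=> i m /Hget [m' [f [_ Hx [_ _ Hext _]]]].
  by rewrite /base_ext /nu /= Hx.
Qed.

Lemma unfolding_wrapM_ans PiM PiW t :
  safe_mappings M -> safe_head q ->
  is_unfolding q M PiM -> is_unfolding q (wrapM M) PiW ->
  prog_ans (base_ext extD) PiM t <-> prog_ans (wrap_ext extD M) PiW t.
Proof.
move=> HM Hhead HPiM HPiW.
rewrite (unfolding_ans_ground _ _ HPiM HM Hhead).
rewrite (unfolding_ans_ground _ _ HPiW (@safe_wrapM _ _ _ M) Hhead).
by split=> -[ms Hms Hg]; [apply: ground_answer_wrap Hms Hg | apply: ground_answer_unwrap Hms Hg].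
Qed.

End WrappedGroundAnswers.

Section Objects.
Variables (Lname F VT C : Type).

(* The object p(nu) built from a tuple c = nu(z) of the view of m; the
   empty-tuple case is junk, and never arises for a safe mapping with p
   having arguments. *)
Definition mapping_object (m : mapping Lname F VT) (c : seq C) (p : F * seq nat) :
    Defs.val F C :=
  if c is c0 :: _ then VF p.1 (map (fun y => VC (nth c0 c (index y (mzs m)))) p.2)
  else VF p.1 [::].

Lemma mapping_object_map (m : mapping Lname F VT) (nu : nat -> C) p :
  (forall y, List.In y p.2 -> List.In y (mzs m)) ->
  mapping_object m (map nu (mzs m)) p = VF p.1 (map (fun y => VC (nu y)) p.2).
Proof.
rewrite /mapping_object; case E: (mzs m) => [|z zs] Hp.
  by case: p Hp => g [|y ys] // /(_ y (or_introl erefl)).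
congr VF; apply: List.map_ext_in => y /Hp /In_mem Hy.
by rewrite (nth_map y) ?index_mem ?nth_index.
Qed.

Definition objects (M : seq (mapping Lname F VT)) (extD : VT -> seq (seq C)) :=
  List.flat_map (fun m => List.flat_map (fun c => map (mapping_object m c) (mts m))
    (extD (mV m))) M.

Lemma ground_answer_objects (M : seq (mapping Lname F VT)) extD q ms t :
  safe_mappings M -> safe_head q -> List.Forall (fun m => List.In m M) ms ->
  ground_answer (base_ext extD) q ms t ->
  List.In t (seqs_over (objects M extD) (size (qhead q))).
Proof.
move=> HM Hhead Hms [nu [gq [Hsz [Hf [Hb ->]]]]].
rewrite -(size_map gq); apply: seqs_over_complete => _ /List.in_map_iff [x [<- Hx]].
have [L [vs [/(List.In_nth_error _ _) [i Hq] Hxv]]] := Hhead x Hx.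
have [m Hm] := nth_error_same_size (esym Hsz) Hq.
have [_ HF] := Hf _ _ _ _ Hq Hm; have [p Hp ->] := Forall2_in_left HF Hxv.
have HmM := proj1 (List.Forall_forall _ _) Hms m (List.nth_error_In _ _ Hm).
apply/List.in_flat_map; exists m; split=> //.
apply/List.in_flat_map; exists (map (fun z => nu (i.+1, z)) (mzs m)); split; first exact: Hb.
apply/List.in_map_iff; exists p; split=> //.
by rewrite mapping_object_map //; apply: HM.
Qed.

End Objects.

Definition val_sym (F C : Type) (v : Defs.val F C) : option F :=
  if v is VF g _ then Some g else None.

Lemma rule_ans_head_sym (F VT C : Type) (ext : VT -> seq C -> Prop) (r : rule F VT) t :
  rule_ans ext r t -> map (@head_sym F) (rhead r) = map (@val_sym F C) t.
Proof. by move=> [nu [_ ->]]; rewrite -map_comp; apply: eq_map => -[]. Qed.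

Unset Implicit Arguments.
Set Strict Implicit.

Theorem theorem6 (Lname F : eqType) (Vname C : Type)
    (isRole : Lname -> bool)
    (M : seq (mapping Lname F Vname))
    (extD : Vname -> seq (seq C))
    (q : cq Lname)
    (PiM : seq (rule F Vname))
    (PiW : seq (rule F (signature Lname F))) :
  (forall m, List.In m M -> wf_mapping isRole m) ->
  wf_cq isRole q ->
  is_unfolding q M PiM ->
  is_unfolding q (wrapM M) PiW ->
  List.NoDup (atm PiW) ->
  exists ns : seq nat,
    size ns = size PiW /\
    (forall i r n, List.nth_error PiW i = Some r -> List.nth_error ns i = Some n ->
       has_card (rule_ans (wrap_ext extD M) r) n) /\
    has_card (prog_ans (base_ext extD) PiM) (sumn ns).
Proof.
move=> Hwf [_ Hhead] HPiM HPiW Hrows.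
have HM : safe_mappings M by move=> m /Hwf [].
have Hans t := unfolding_wrapM_ans extD t HM Hhead HPiM HPiW.
have [||ns [Hsize [Hcard Hsum]]] :=
  has_card_bigcup (P := rule_ans (wrap_ext extD M)) (rs := PiW)
    (bound := seqs_over (objects M extD) (size (qhead q))).
- move=> r t Hr Ha.
  have /Hans /(unfolding_ans_ground _ _ HPiM HM Hhead) [ms Hms Hg] :
    prog_ans (wrap_ext extD M) PiW t by exists r.
  exact: ground_answer_objects HM Hhead Hms Hg.
- move=> i j ri rj t Hi Hj /rule_ans_head_sym Ei /rule_ans_head_sym Ej.
  apply: (proj1 (List.NoDup_nth_error _) Hrows).
    by apply/ltP; change (i < size (atm PiW)); rewrite size_map (nth_error_size Hi).
  by rewrite /atm !nth_error_seq_map Hi Hj /= Ei Ej.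
- by exists ns; do 2!split=> //; apply: has_card_iff Hsum => t; rewrite Hans.
Qed.
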